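(* Let $X$ be either the unit interval $[0,1]$ or the circle $S^1$ (with its usual metric), let $\mu$ be a finite nonatomic Radon measure on $X$ giving positive measure to every nonempty open set, and let $T:X\to X$ be an invertible continuous measure-preserving map (a homeomorphism preserving $\mu$). Then for any sequence of natural numbers $n_k\to\infty$, $T$ is rigid along $\{n_k\}$ if and only if $T$ is uniformly rigid along $\{n_k\}$.
   Context: $T$ is rigid along $\{n_k\}$ if $\mu(A\triangle T^{n_k}A)\to 0$ for every measurable $A\subset X$. $T$ is uniformly rigid along $\{n_k\}$ if $\sup_{x\in X} d(T^{n_k}x,x)\to 0$. *)

From Stdlib Require Import Reals.
Open Scope R_scope.

Inductive Space := Interval | Circle.

(* Interval = [0,1];  Circle = S^1 = R/Z, represented by [0,1). *)
Definition pt (s : Space) : Type :=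
  match s with
  | Interval => {x : R | 0 <= x <= 1}
  | Circle => {x : R | 0 <= x < 1}
  end.

Definition coord (s : Space) : pt s -> R :=
  match s return pt s -> R with
  | Interval => fun x => proj1_sig x
  | Circle => fun x => proj1_sig x
  end.

Definition dist (s : Space) (x y : pt s) : R :=
  match s with
  | Interval => Rabs (coord s x - coord s y)
  | Circle => Rmin (Rabs (coord s x - coord s y)) (1 - Rabs (coord s x - coord s y))
  end.

Definition set (s : Space) := pt s -> Prop.

Definition is_open {s : Space} (U : set s) : Prop :=
  forall x, U x -> exists eps, 0 < eps /\ forall y, dist s x y < eps -> U y.

(* sequential compactness (= compactness in metric spaces) *)
Definition is_compact {s : Space} (K : set s) : Prop :=
  forall u : nat -> pt s, (forall n, K (u n)) ->
    exists (phi : nat -> nat) (l : pt s),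
      (forall n m, (n < m)%nat -> (phi n < phi m)%nat) /\ K l /\
      (forall eps, 0 < eps -> exists N, forall n, (n >= N)%nat ->
          dist s (u (phi n)) l < eps).

Definition sigma_algebra {s : Space} (F : set s -> Prop) : Prop :=
  F (fun _ => True) /\
  (forall A, F A -> F (fun x => ~ A x)) /\
  (forall A : nat -> set s, (forall n, F (A n)) -> F (fun x => exists n, A n x)).

Definition borel {s : Space} (A : set s) : Prop :=
  forall F : set s -> Prop, sigma_algebra F -> (forall U, is_open U -> F U) -> F A.

Definition is_measure {s : Space} (mu : set s -> R) : Prop :=
  (forall A, borel A -> 0 <= mu A) /\
  mu (fun _ => False) = 0 /\
  (forall A : nat -> set s, (forall n, borel (A n)) ->
     (forall n m x, n <> m -> A n x -> A m x -> False) ->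
     infinite_sum (fun n => mu (A n)) (mu (fun x => exists n, A n x))).

Definition nonatomic {s : Space} (mu : set s -> R) : Prop :=
  forall x : pt s, mu (fun y => y = x) = 0.

Definition radon {s : Space} (mu : set s -> R) : Prop :=
  forall A, borel A -> forall eps, 0 < eps ->
    (exists K, is_compact K /\ (forall x, K x -> A x) /\ mu A - eps < mu K) /\
    (exists U, is_open U /\ (forall x, A x -> U x) /\ mu U < mu A + eps).

Definition full_support {s : Space} (mu : set s -> R) : Prop :=
  forall U : set s, is_open U -> (exists x, U x) -> 0 < mu U.

Definition continuous_map {s : Space} (f : pt s -> pt s) : Prop :=
  forall x eps, 0 < eps -> exists delta, 0 < delta /\
    forall y, dist s x y < delta -> dist s (f x) (f y) < eps.

Definition homeomorphism {s : Space} (T : pt s -> pt s) : Prop :=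
  continuous_map T /\
  exists Tinv : pt s -> pt s, continuous_map Tinv /\
    (forall x, Tinv (T x) = x) /\ (forall x, T (Tinv x) = x).

Definition measure_preserving {s : Space} (mu : set s -> R) (T : pt s -> pt s) : Prop :=
  forall A, borel A -> mu (fun x => A (T x)) = mu A.

Definition iter {s : Space} (n : nat) (T : pt s -> pt s) : pt s -> pt s :=
  fun x => Nat.iter n T x.

Definition image_iter {s : Space} (T : pt s -> pt s) (n : nat) (A : set s) : set s :=
  fun y => exists x, A x /\ iter n T x = y.

Definition symdiff {s : Space} (A B : set s) : set s :=
  fun x => (A x /\ ~ B x) \/ (B x /\ ~ A x).

Definition tends_to_infty (n : nat -> nat) : Prop :=
  forall M : nat, exists K, forall k, (k >= K)%nat -> (M <= n k)%nat.

Definition rigid_along {s : Space} (mu : set s -> R) (T : pt s -> pt s)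
  (n : nat -> nat) : Prop :=
  forall A, borel A -> Un_cv (fun k => mu (symdiff A (image_iter T (n k) A))) 0.

Definition uniformly_rigid_along {s : Space} (T : pt s -> pt s) (n : nat -> nat) : Prop :=
  forall eps, 0 < eps -> exists K, forall k, (k >= K)%nat ->
    forall x, dist s (iter (n k) T x) x <= eps.

From Pilot Require Import Defs.
From Stdlib Require Import Reals Lra Lia List.
From Stdlib Require Import Classical FunctionalExtensionality PropExtensionality
  ProofIrrelevance IndefiniteDescription.
Open Scope R_scope.

(* Uniform rigidity implies rigidity for any Radon measure: squeezing a Borel
   set [A] between a compact [K] and an open [U] of nearly the same measure,
   a map moving points less than the gap between [K] and the complement of [U]
   changes [A] only inside [U \ K], up to measure preservation.

   Rigidity implies uniform rigidity by a connectedness argument.  Cover the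
   space by finitely many small open windows (arcs on the circle); they have
   positive measure.  If [T^t] moves a point [x] by more than [eps], then the
   window [P] of [x] either is mapped off itself or, since [T^t] maps the
   segment of [P] joining [x] to a point [z] with [T^t z] in [P] onto a
   connected set, [T^t P] swallows a neighbouring window.  Either way some
   window lies in [P] symmetric-difference [T^t P], which rigidity forbids
   for large [t = n_k]. *)

(* Stdlib's [Reals] also exports a [dist]; in this file [dist] is the metric of
   the two spaces. *)
Local Notation dist := Defs.dist.

Lemma coord_inj (s : Space) (x y : pt s) : coord s x = coord s y -> x = y.
Proof.
  destruct s; destruct x as [x Hx]; destruct y as [y Hy]; simpl; intros ->;
  f_equal; apply proof_irrelevance.
Qed.

Ltac split_abs_min := repeat (match goal with
  | |- context [Rabs ?a] => let h := fresh "h" in destruct (Rcase_abs a) as [h|h];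
        [rewrite (Rabs_left a h) in * | rewrite (Rabs_right a h) in *]
  | H : context [Rabs ?a] |- _ => let h := fresh "h" in destruct (Rcase_abs a) as [h|h];
        [rewrite (Rabs_left a h) in * | rewrite (Rabs_right a h) in *]
  | |- context [Rmin ?a ?b] => let h := fresh "h" in destruct (Rle_dec a b) as [h|h];
        [rewrite (Rmin_left a b h) in * | rewrite (Rmin_right a b) in * by lra]
  | H : context [Rmin ?a ?b] |- _ => let h := fresh "h" in destruct (Rle_dec a b) as [h|h];
        [rewrite (Rmin_left a b h) in * | rewrite (Rmin_right a b) in * by lra]
  end).

Lemma dist_sym s x y : dist s x y = dist s y x.
Proof. destruct s; destruct x as [x Hx]; destruct y as [y Hy]; simpl; split_abs_min; lra. Qed.

Lemma dist_triangle s x y z : dist s x z <= dist s x y + dist s y z.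
Proof.
  destruct s; destruct x as [x Hx]; destruct y as [y Hy]; destruct z as [z Hz]; simpl;
  split_abs_min; lra.
Qed.

Lemma dist_le_0_eq s x y : dist s x y <= 0 -> x = y.
Proof.
  intros H; apply coord_inj.
  destruct s; destruct x as [x Hx]; destruct y as [y Hy]; simpl in *; split_abs_min; lra.
Qed.

Lemma set_ext {s : Space} (A B : set s) : (forall x, A x <-> B x) -> A = B.
Proof.
  intros H; apply functional_extensionality; intros x; apply propositional_extensionality; auto.
Qed.

Lemma borel_open {s : Space} (U : set s) : is_open U -> borel U.
Proof. intros HU F HF HO; auto. Qed.

Lemma borel_compl {s : Space} (A : set s) : borel A -> borel (fun x => ~ A x).
Proof. intros HA F HF HO. destruct HF as (H1 & H2 & H3). apply H2. apply HA; [split; auto | auto]. Qed.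

Lemma borel_countable_union {s : Space} (A : nat -> set s) :
  (forall n, borel (A n)) -> borel (fun x => exists n, A n x).
Proof. intros HA F HF HO. destruct HF as (H1 & H2 & H3). apply H3. intros n; apply HA; [split; auto | auto]. Qed.

Lemma borel_union {s : Space} (A B : set s) : borel A -> borel B -> borel (fun x => A x \/ B x).
Proof.
  intros HA HB.
  replace (fun x => A x \/ B x) with (fun x => exists n, (match n with O => A | _ => B end) x).
  - apply borel_countable_union. intros [|n]; auto.
  - apply set_ext. intros x; split.
    + intros [[|n] H]; auto.
    + intros [H|H]; [exists O | exists 1%nat]; auto.
Qed.

Lemma borel_diff {s : Space} (A B : set s) : borel A -> borel B -> borel (fun x => A x /\ ~ B x).
Proof.
  intros HA HB.
  replace (fun x => A x /\ ~ B x) with (fun x => ~ (~ A x \/ B x)).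
  - apply borel_compl, borel_union; [apply borel_compl|]; auto.
  - apply set_ext. intros x; split; [|tauto]. intros H; split; [apply NNPP|]; tauto.
Qed.

Lemma borel_symdiff {s : Space} (A B : set s) : borel A -> borel B -> borel (symdiff A B).
Proof. intros; unfold symdiff; apply borel_union; apply borel_diff; auto. Qed.

Lemma borel_closed {s : Space} (A : set s) : is_open (fun x => ~ A x) -> borel A.
Proof.
  intros H. replace A with (fun x => ~ (fun y => ~ A y) x).
  - apply borel_compl, borel_open; auto.
  - apply set_ext; intros x; split; [apply NNPP | tauto].
Qed.

Lemma measure_nonneg {s : Space} (mu : set s -> R) (A : set s) :
  is_measure mu -> borel A -> 0 <= mu A.
Proof. intros (H & _ & _); auto. Qed.

Lemma measure_disjoint_union {s : Space} (mu : set s -> R) (A B : set s) : is_measure mu ->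
  borel A -> borel B -> (forall x, A x -> B x -> False) ->
  mu (fun x => A x \/ B x) = mu A + mu B.
Proof.
  intros (Hpos & H0 & Hadd) HA HB Hd.
  set (f := fun n : nat => match n with O => A | 1%nat => B | _ => (fun _ : pt s => False) end).
  assert (Hs : infinite_sum (fun n => mu (f n)) (mu (fun x => exists n, f n x))).
  { apply Hadd.
    - intros [|[|n]]; simpl; auto. apply borel_open. intros x [].
    - intros [|[|n]] [|[|m]] x Hnm H1 H2; simpl in *; try tauto;
      try (apply Hnm; reflexivity); eapply Hd; eauto. }
  replace (fun x => exists n, f n x) with (fun x => A x \/ B x) in Hs.
  2:{ apply set_ext; intros x; split.
      - intros [H|H]; [exists O|exists 1%nat]; auto.
      - intros [[|[|n]] H]; simpl in H; tauto. }
  apply (uniqueness_sum _ _ _ Hs).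
  intros eps Heps. exists 1%nat. intros n Hn.
  assert (E : sum_f_R0 (fun n => mu (f n)) n = mu A + mu B).
  { induction n as [|n IH]; [lia|].
    destruct n as [|n]; simpl; [reflexivity|].
    simpl in IH. rewrite IH by lia. simpl. rewrite H0. ring. }
  rewrite E. unfold R_dist. rewrite Rminus_diag, Rabs_R0; auto.
Qed.

Lemma measure_split {s : Space} (mu : set s -> R) (A B : set s) : is_measure mu ->
  borel A -> borel B -> (forall x, A x -> B x) ->
  mu B = mu A + mu (fun x => B x /\ ~ A x).
Proof.
  intros Hm HA HB Hsub.
  rewrite <- measure_disjoint_union; auto.
  - f_equal. apply set_ext; intros x; split.
    + intros H. destruct (classic (A x)); tauto.
    + intros [H|H]; [apply Hsub; auto | tauto].
  - apply borel_diff; auto.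
  - tauto.
Qed.

Lemma measure_mono {s : Space} (mu : set s -> R) (A B : set s) : is_measure mu ->
  borel A -> borel B -> (forall x, A x -> B x) -> mu A <= mu B.
Proof.
  intros Hm HA HB Hsub. rewrite (measure_split mu A B) by auto.
  assert (0 <= mu (fun x => B x /\ ~ A x)) by (apply measure_nonneg; auto; apply borel_diff; auto).
  lra.
Qed.

Lemma measure_subadditive {s : Space} (mu : set s -> R) (A B : set s) : is_measure mu ->
  borel A -> borel B -> mu (fun x => A x \/ B x) <= mu A + mu B.
Proof.
  intros Hm HA HB.
  replace (fun x => A x \/ B x) with (fun x => A x \/ (fun y => B y /\ ~ A y) x).
  - rewrite measure_disjoint_union; auto.
    + assert (mu (fun y => B y /\ ~ A y) <= mu B)
        by (apply measure_mono; auto; [apply borel_diff; auto | tauto]).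
      lra.
    + apply borel_diff; auto.
    + tauto.
  - apply set_ext; intros x; split; [tauto|].
    intros [H|H]; [tauto|]. destruct (classic (A x)); tauto.
Qed.

Lemma continuous_iter {s : Space} (f : pt s -> pt s) n :
  continuous_map f -> continuous_map (iter n f).
Proof.
  intros Hf. induction n as [|n IH].
  - intros x eps He. exists eps; split; auto.
  - intros x eps He. destruct (Hf (iter n f x) eps He) as (d1 & Hd1 & H1).
    destruct (IH x d1 Hd1) as (d2 & Hd2 & H2). exists d2; split; auto.
    intros y Hy. apply H1, H2; auto.
Qed.

Lemma iter_commute {s : Space} (T : pt s -> pt s) n x : iter n T (T x) = T (iter n T x).
Proof.
  revert x; induction n as [|n IH]; intros x; [reflexivity|].
  change (T (iter n T (T x)) = T (T (iter n T x))). rewrite IH; reflexivity.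
Qed.

Lemma iter_cancel {s : Space} (T Ti : pt s -> pt s) n x :
  (forall x, Ti (T x) = x) -> iter n Ti (iter n T x) = x.
Proof.
  intros H. revert x; induction n as [|n IH]; intros x; [reflexivity|].
  replace (iter (S n) T x) with (iter n T (T x)) by apply iter_commute.
  change (Ti (iter n Ti (iter n T (T x))) = x). rewrite IH. apply H.
Qed.

Lemma image_iter_iff {s : Space} (T Ti : pt s -> pt s) n (A : set s) y :
  (forall x, Ti (T x) = x) -> (forall x, T (Ti x) = x) ->
  (image_iter T n A y <-> A (iter n Ti y)).
Proof.
  intros H1 H2. split.
  - intros (x & Hx & <-). rewrite iter_cancel; auto.
  - intros H. exists (iter n Ti y); split; auto. apply iter_cancel; auto.
Qed.

Lemma image_iter_open {s : Space} (T : pt s -> pt s) n (U : set s) :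
  homeomorphism T -> is_open U -> is_open (image_iter T n U).
Proof.
  intros (HT & Ti & HTi & H1 & H2) HU y Hy.
  rewrite (image_iter_iff T Ti) in Hy by auto.
  destruct (HU _ Hy) as (e & He & Hball).
  destruct (continuous_iter Ti n HTi y e He) as (d & Hd & Hc).
  exists d; split; auto. intros z Hz. rewrite (image_iter_iff T Ti) by auto. apply Hball, Hc; auto.
Qed.

Lemma image_iter_borel {s : Space} (T : pt s -> pt s) n (A : set s) :
  homeomorphism T -> borel A -> borel (image_iter T n A).
Proof.
  intros HT HA. pose proof HT as (_ & Ti & _ & H1 & H2).
  apply (HA (fun B => borel (image_iter T n B))).
  - split; [|split].
    + replace (image_iter T n (fun _ => True)) with (fun _ : pt s => True).
      * apply borel_open. intros x _; exists 1; split; [lra|auto].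
      * apply set_ext; intros x. rewrite (image_iter_iff T Ti) by auto. tauto.
    + intros B HB.
      replace (image_iter T n (fun x => ~ B x)) with (fun y => ~ (image_iter T n B) y).
      * apply borel_compl; auto.
      * apply set_ext; intros x. rewrite !(image_iter_iff T Ti) by auto. tauto.
    + intros B HB.
      replace (image_iter T n (fun x => exists k, B k x))
        with (fun y => exists k, (image_iter T n (B k)) y).
      * apply borel_countable_union; auto.
      * apply set_ext; intros x. setoid_rewrite (image_iter_iff T Ti); auto. tauto.
  - intros U HU. apply borel_open, image_iter_open; auto.
Qed.

Lemma measure_image_iter {s : Space} (mu : set s -> R) (T : pt s -> pt s) n (A : set s) :
  homeomorphism T -> measure_preserving mu T -> borel A -> mu (image_iter T n A) = mu A.
Proof.
  intros HT Hmp HA. pose proof HT as (_ & Ti & _ & H1 & H2).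
  induction n as [|n IH].
  - f_equal. apply set_ext; intros x. rewrite (image_iter_iff T Ti) by auto. simpl. tauto.
  - rewrite <- IH, <- (Hmp (image_iter T (S n) A)) by (apply image_iter_borel; auto).
    f_equal. apply set_ext; intros x. rewrite !(image_iter_iff T Ti) by auto.
    change (iter (S n) Ti (T x)) with (Ti (iter n Ti (T x))).
    rewrite <- iter_commute, H1. tauto.
Qed.

Lemma inv_succ_small (eps : R) :
  0 < eps -> exists N, forall n, (n >= N)%nat -> / (INR n + 1) < eps.
Proof.
  intros He. destruct (archimed_cor1 eps He) as (N & HN & HN0). exists N. intros n Hn.
  apply Rle_lt_trans with (/ INR N); auto.
  apply Rinv_le_contravar. apply lt_0_INR; auto.
  apply le_INR in Hn. lra.
Qed.

Lemma inv_succ_pos n : 0 < / (INR n + 1).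
Proof. apply Rinv_0_lt_compat. pose proof (pos_INR n). lra. Qed.

Lemma strictly_increasing_ge_id (phi : nat -> nat) :
  (forall n m, (n < m)%nat -> (phi n < phi m)%nat) -> forall n, (n <= phi n)%nat.
Proof. intros H n. induction n as [|n IH]; [lia|]. specialize (H n (S n)). lia. Qed.

Lemma subsequence_close {s : Space} (u v : nat -> pt s) (phi : nat -> nat) (l : pt s) (e : R) :
  0 < e -> (forall n, dist s (u n) (v n) < / (INR n + 1)) ->
  (forall n m, (n < m)%nat -> (phi n < phi m)%nat) ->
  (forall eps, 0 < eps -> exists N, forall n, (n >= N)%nat -> dist s (v (phi n)) l < eps) ->
  exists n, dist s (u n) l < e.
Proof.
  intros He Huv Hphi Hconv.
  destruct (Hconv (e / 2)) as (N1 & HN1); [lra|].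
  destruct (inv_succ_small (e / 2)) as (N2 & HN2); [lra|].
  set (n := max N1 N2). exists (phi n).
  specialize (HN1 n ltac:(lia)).
  assert (HN : (phi n >= N2)%nat) by (pose proof (strictly_increasing_ge_id phi Hphi n); lia).
  specialize (HN2 _ HN). specialize (Huv (phi n)).
  pose proof (dist_triangle s (u (phi n)) (v (phi n)) l). lra.
Qed.

Lemma compact_borel {s : Space} (K : set s) : is_compact K -> borel K.
Proof.
  intros HK. apply borel_closed. intros x Hx. apply NNPP. intros Hno.
  assert (Hs : forall n : nat, exists y, dist s x y < / (INR n + 1) /\ K y).
  { intros n. apply NNPP; intros Hn. apply Hno. exists (/ (INR n + 1)); split; [apply inv_succ_pos|].
    intros y Hy HKy. apply Hn. exists y. auto. }
  apply functional_choice in Hs as (v & Hv).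
  destruct (HK v (fun n => proj2 (Hv n))) as (phi & l & Hphi & Kl & Hconv).
  assert (Hxl : dist s x l <= 0).
  { apply Rnot_lt_le. intros Hpos.
    destruct (subsequence_close (fun _ => x) v phi l (dist s x l) Hpos) as (n & Hn); auto.
    - intros n. apply Hv.
    - simpl in Hn. lra. }
  apply dist_le_0_eq in Hxl. subst. auto.
Qed.

Lemma compact_uniform_nbhd {s : Space} (K U : set s) :
  is_compact K -> is_open U -> (forall x, K x -> U x) ->
  exists d, 0 < d /\ forall x y, K x -> dist s x y < d -> U y.
Proof.
  intros HK HU Hsub. apply NNPP. intros Hno.
  assert (Hs : forall n : nat, exists p : pt s * pt s,
             K (fst p) /\ dist s (snd p) (fst p) < / (INR n + 1) /\ ~ U (snd p)).
  { intros n. apply NNPP; intros Hn. apply Hno. exists (/ (INR n + 1)); split; [apply inv_succ_pos|].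
    intros x y Kx Hxy. apply NNPP; intros Uy. apply Hn. exists (x, y); simpl.
    rewrite dist_sym. auto. }
  apply functional_choice in Hs as (w & Hw).
  destruct (HK (fun n => fst (w n)) (fun n => proj1 (Hw n))) as (phi & l & Hphi & Kl & Hconv).
  destruct (HU l (Hsub l Kl)) as (e & He & Hball).
  destruct (subsequence_close (fun n => snd (w n)) (fun n => fst (w n)) phi l e He)
    as (n & Hn); auto.
  - intros n. apply Hw.
  - apply (proj2 (proj2 (Hw n))), Hball. rewrite dist_sym. auto.
Qed.

(* Squeeze a Borel set [A] between a
   compact [K] and an open [U] of almost equal measures.  Once [T^t] moves
   points less than the width of a uniform neighbourhood of [K] inside [U],
   [T^t K] lies in [U], and the symmetric difference of [A] and [T^t A] is
   covered by four sets of small measure. *)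

Lemma measure_symdiff_sandwich {s : Space} (mu : set s -> R) (K A U L B : set s) :
  is_measure mu -> borel K -> borel A -> borel U -> borel L -> borel B ->
  (forall x, K x -> A x) -> (forall x, A x -> U x) ->
  (forall x, L x -> B x) -> (forall x, L x -> U x) ->
  mu (symdiff A B) <= (mu A - mu K) + (mu U - mu L) + (mu B - mu L) + (mu U - mu A).
Proof.
  intros Hm bK bA bU bL bB HKA HAU HLB HLU.
  set (S1 := fun x => A x /\ ~ K x). set (S2 := fun x => U x /\ ~ L x).
  set (S3 := fun x => B x /\ ~ L x). set (S4 := fun x => U x /\ ~ A x).
  assert (b1 : borel S1) by (apply borel_diff; auto).
  assert (b2 : borel S2) by (apply borel_diff; auto).
  assert (b3 : borel S3) by (apply borel_diff; auto).
  assert (b4 : borel S4) by (apply borel_diff; auto).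
  assert (E1 : mu A = mu K + mu S1) by (apply measure_split; auto).
  assert (E2 : mu U = mu L + mu S2) by (apply measure_split; auto).
  assert (E3 : mu B = mu L + mu S3) by (apply measure_split; auto).
  assert (E4 : mu U = mu A + mu S4) by (apply measure_split; auto).
  assert (b12 : borel (fun x => S1 x \/ S2 x)) by (apply borel_union; auto).
  assert (b123 : borel (fun x => (S1 x \/ S2 x) \/ S3 x)) by (apply borel_union; auto).
  assert (Hcover : mu (symdiff A B) <= mu (fun x => ((S1 x \/ S2 x) \/ S3 x) \/ S4 x)).
  { apply measure_mono; auto.
    - apply borel_symdiff; auto.
    - apply borel_union; auto.
    - unfold S1, S2, S3, S4. intros x [[H1 H2]|[H1 H2]].
      + destruct (classic (K x)); [|tauto]. left; left; right. split; auto.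
      + destruct (classic (L x)); [|tauto]. right. split; auto. }
  pose proof (measure_subadditive mu _ _ Hm b123 b4).
  pose proof (measure_subadditive mu _ _ Hm b12 b3).
  pose proof (measure_subadditive mu _ _ Hm b1 b2). lra.
Qed.

Lemma uniformly_rigid_rigid (s : Space) (mu : set s -> R) (T : pt s -> pt s) (n : nat -> nat) :
  is_measure mu -> radon mu -> homeomorphism T -> measure_preserving mu T ->
  uniformly_rigid_along T n -> rigid_along mu T n.
Proof.
  intros Hm Hr HT Hmp Hu A HA eps Heps.
  destruct (Hr A HA (eps / 5) ltac:(lra)) as [(K & HKc & HKA & HK) (U & HUo & HAU & HU)].
  assert (HKb : borel K) by (apply compact_borel; auto).
  assert (HUb : borel U) by (apply borel_open; auto).
  destruct (compact_uniform_nbhd K U HKc HUo ltac:(auto)) as (d & Hd & Hnbhd).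
  destruct (Hu (d / 2) ltac:(lra)) as (K0 & HK0).
  exists K0. intros k Hk. specialize (HK0 k Hk).
  assert (HLU : forall x, image_iter T (n k) K x -> U x).
  { intros x (y & Hy & <-). apply (Hnbhd y); auto. rewrite dist_sym. specialize (HK0 y). lra. }
  assert (HLB : forall x, image_iter T (n k) K x -> image_iter T (n k) A x)
    by (intros x (y & Hy & <-); exists y; auto).
  pose proof (measure_symdiff_sandwich mu K A U (image_iter T (n k) K) (image_iter T (n k) A)
                Hm HKb HA HUb (image_iter_borel T _ K HT HKb) (image_iter_borel T _ A HT HA)
                HKA HAU HLB HLU) as Hbound.
  rewrite !measure_image_iter in Hbound by auto.
  pose proof (measure_nonneg mu _ Hm (borel_symdiff _ _ HA (image_iter_borel T (n k) A HT HA))).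
  unfold R_dist. rewrite Rminus_0_r, Rabs_right by lra. lra.
Qed.

(* The supremum [l] of the points up
   to which [P] holds throughout can lie in neither set. *)
Lemma interval_connected (a b : R) (P Q : R -> Prop) : a <= b ->
  (forall t, a <= t <= b -> P t \/ Q t) ->
  (forall t, a <= t <= b -> P t -> Q t -> False) ->
  (forall t, a <= t <= b -> P t ->
     exists d, 0 < d /\ forall u, a <= u <= b -> Rabs (u - t) < d -> P u) ->
  (forall t, a <= t <= b -> Q t ->
     exists d, 0 < d /\ forall u, a <= u <= b -> Rabs (u - t) < d -> Q u) ->
  P a -> Q b -> False.
Proof.
  intros Hab Hor Hdis HP HQ Pa Qb.
  set (E := fun t => a <= t <= b /\ forall u, a <= u <= t -> P u).
  assert (Ea : E a). { split; [lra|]. intros u Hu. replace u with a by lra. auto. }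
  assert (Hbd : bound E). { exists b. intros t [Ht _]. lra. }
  destruct (completeness E Hbd (ex_intro _ a Ea)) as (l & Hub & Hlub).
  assert (Hal : a <= l) by (apply Hub; auto).
  assert (Hlb : l <= b). { apply Hlub. intros t [Ht _]. lra. }
  assert (Pbelow : forall u, a <= u < l -> P u).
  { intros u Hu. apply NNPP. intros HnP.
    assert (l <= u); [|lra]. apply Hlub. intros t [Ht Ht2].
    apply Rnot_lt_le. intros Htu. apply HnP, Ht2. lra. }
  destruct (Hor l ltac:(lra)) as [Pl|Ql].
  - (* [P] would extend beyond [l], or hold at [b] together with [Q]. *)
    destruct (HP l ltac:(lra) Pl) as (d & Hd & Hball).
    destruct (Req_dec l b) as [->|Hne]; [eapply Hdis; eauto; lra|].
    set (t' := Rmin b (l + d/2)).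
    assert (Et : E t').
    { unfold t'; split.
      - unfold Rmin; destruct Rle_dec; lra.
      - intros u Hu. destruct (Rlt_le_dec u l) as [Hul|Hul]; [apply Pbelow; lra|].
        unfold Rmin in Hu; destruct Rle_dec in Hu;
          (apply Hball; [lra | rewrite Rabs_right; lra]). }
    apply Hub in Et. unfold t', Rmin in Et; destruct Rle_dec in Et; lra.
  - (* points just below [l] would lie in both sets. *)
    destruct (HQ l ltac:(lra) Ql) as (d & Hd & Hball).
    destruct (Req_dec l a) as [->|Hne]; [eapply Hdis; eauto; lra|].
    set (u := Rmax a (l - d/2)).
    assert (Hu : a <= u < l) by (unfold u, Rmax; destruct Rle_dec; lra).
    apply (Hdis u); [lra | apply Pbelow; auto |].
    apply Hball; [lra|]. unfold u, Rmax in *; destruct Rle_dec; rewrite Rabs_left; lra.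
Qed.

Lemma iter_path_connected (s : Space) (T : pt s -> pt s) (t : nat) (pi : R -> pt s)
  (a b : R) (O1 O2 : set s) :
  homeomorphism T -> (forall u v, dist s (pi u) (pi v) <= Rabs (u - v)) -> a <= b ->
  is_open O1 -> is_open O2 -> (forall y, O1 y -> O2 y -> False) ->
  (forall u, a <= u <= b -> O1 (iter t T (pi u)) \/ O2 (iter t T (pi u))) ->
  O1 (iter t T (pi a)) -> O2 (iter t T (pi b)) -> False.
Proof.
  intros (HT & _) Hlip Hab H1 H2 Hdis Hor Ha Hb.
  assert (Hopen : forall O : set s, is_open O -> forall v, O (iter t T (pi v)) ->
            exists d, 0 < d /\ forall u, a <= u <= b -> Rabs (u - v) < d -> O (iter t T (pi u))).
  { intros O HO v Hv. destruct (HO _ Hv) as (e & He & Hball).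
    destruct (continuous_iter T t HT (pi v) e He) as (d & Hd & Hc).
    exists d; split; auto. intros u _ Hu. apply Hball, Hc.
    eapply Rle_lt_trans; [apply Hlip|]. rewrite Rabs_minus_sym; auto. }
  apply (interval_connected a b (fun u => O1 (iter t T (pi u))) (fun u => O2 (iter t T (pi u))));
    [auto | auto | intros u _; apply Hdis | intros u _; apply Hopen; auto
    | intros u _; apply Hopen; auto | auto | auto].
Qed.

(* Suppose finitely many Borel
   sets [S i] of positive measure detect displacements larger than [eps]: when
   [T^t] moves some point by more than [eps], some [S i'] lies inside the
   symmetric difference of some [S i] and [T^t (S i)].  Along a rigid sequence
   these symmetric differences eventually have measure below [min mu (S i)],
   so no point is moved by more than [eps]. *)

Lemma finite_positive_min {I : Type} (f : I -> R) (l : list I) :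
  (forall i, In i l -> 0 < f i) -> exists c, 0 < c /\ forall i, In i l -> c <= f i.
Proof.
  induction l as [|a l IH]; intros H.
  - exists 1; split; [lra|]. intros i [].
  - destruct IH as (c & Hc & Hc2). { intros i Hi; apply H; right; auto. }
    exists (Rmin c (f a)). split.
    + apply Rmin_glb_lt; auto. apply H; left; auto.
    + intros i [<-|Hi]; [apply Rmin_r | eapply Rle_trans; [apply Rmin_l | auto]].
Qed.

Lemma eventually_forall_finite {I : Type} (P : I -> nat -> Prop) (l : list I) :
  (forall i, In i l -> exists N, forall k, (k >= N)%nat -> P i k) ->
  exists N, forall k, (k >= N)%nat -> forall i, In i l -> P i k.
Proof.
  induction l as [|a l IH]; intros H.
  - exists O. intros k _ i [].
  - destruct IH as (N & HN). { intros i Hi; apply H; right; auto. }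
    destruct (H a (or_introl eq_refl)) as (N2 & HN2).
    exists (max N N2). intros k Hk i [<-|Hi]; [apply HN2 | apply HN]; auto; lia.
Qed.

Definition detects_displacement {s : Space} (T : pt s -> pt s) {I : Type}
    (S : I -> set s) (l : list I) (eps : R) : Prop :=
  forall t x, eps < dist s (iter t T x) x -> exists i i', In i l /\ In i' l /\
    forall y, S i' y -> symdiff (S i) (image_iter T t (S i)) y.

Lemma rigid_displacement_bound (s : Space) (mu : set s -> R) (T : pt s -> pt s) (n : nat -> nat)
  (I : Type) (S : I -> set s) (l : list I) (eps : R) :
  is_measure mu -> homeomorphism T -> rigid_along mu T n ->
  (forall i, In i l -> borel (S i) /\ 0 < mu (S i)) ->
  detects_displacement T S l eps ->
  exists K, forall k, (k >= K)%nat -> forall x, dist s (iter (n k) T x) x <= eps.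
Proof.
  intros Hm HT Hr HS Hdetect.
  destruct (finite_positive_min (fun i => mu (S i)) l) as (c & Hc & Hmin).
  { intros i Hi; apply HS; auto. }
  destruct (eventually_forall_finite
              (fun i k => mu (symdiff (S i) (image_iter T (n k) (S i))) < c) l) as (K & HK).
  { intros i Hi. destruct (Hr (S i) (proj1 (HS i Hi)) c Hc) as (N & HN). exists N.
    intros k Hk. specialize (HN k Hk). unfold R_dist in HN. rewrite Rminus_0_r in HN.
    pose proof (Rle_abs (mu (symdiff (S i) (image_iter T (n k) (S i))))). lra. }
  exists K. intros k Hk x. apply Rnot_lt_le. intros Hx.
  destruct (Hdetect _ _ Hx) as (i & i' & Hi & Hi' & Hsub).
  specialize (HK k Hk i Hi). specialize (Hmin i' Hi').
  assert (mu (S i') <= mu (symdiff (S i) (image_iter T (n k) (S i)))); [|lra].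
  apply measure_mono; auto; [apply HS; auto|].
  apply borel_symdiff; [|apply image_iter_borel]; auto; apply HS; auto.
Qed.

(* The interval.  Points of [0, 1] are handled through their coordinate;
   [iclamp] is the 1-Lipschitz retraction of [R] onto [0, 1], giving paths. *)

Definition icoord : pt Interval -> R := coord Interval.

Lemma icoord_bounds w : 0 <= icoord w <= 1.
Proof. destruct w as [w Hw]; simpl; auto. Qed.

Lemma iclamp_bounds (t : R) : 0 <= Rmax 0 (Rmin t 1) <= 1.
Proof. unfold Rmax, Rmin; repeat destruct Rle_dec; lra. Qed.

Definition iclamp (t : R) : pt Interval := exist _ (Rmax 0 (Rmin t 1)) (iclamp_bounds t).

Lemma icoord_iclamp t : 0 <= t <= 1 -> icoord (iclamp t) = t.
Proof. intros H. unfold icoord, iclamp; simpl. unfold Rmax, Rmin; repeat destruct Rle_dec; lra. Qed.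

Lemma iclamp_icoord w : iclamp (icoord w) = w.
Proof. apply coord_inj. apply icoord_iclamp, icoord_bounds. Qed.

Lemma iclamp_lipschitz t u : dist Interval (iclamp t) (iclamp u) <= Rabs (t - u).
Proof. simpl. unfold Rmax, Rmin; repeat destruct Rle_dec; split_abs_min; lra. Qed.

Lemma interval_window_open a b : is_open (fun y : pt Interval => a < icoord y < b).
Proof.
  intros y Hy. exists (Rmin (icoord y - a) (b - icoord y)). split.
  - apply Rmin_glb_lt; lra.
  - intros z Hz. change (dist Interval y z) with (Rabs (icoord y - icoord z)) in Hz.
    split_abs_min; lra.
Qed.

Lemma interval_image_between (T : pt Interval -> pt Interval) (t : nat) (A : set Interval)
  (z x y : pt Interval) :
  homeomorphism T ->
  (forall u, Rmin (icoord z) (icoord x) <= u <= Rmax (icoord z) (icoord x) -> A (iclamp u)) ->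
  (icoord (iter t T z) < icoord y < icoord (iter t T x) \/
   icoord (iter t T x) < icoord y < icoord (iter t T z)) ->
  image_iter T t A y.
Proof.
  intros HT HA Hbetween. apply NNPP; intros Hn.
  set (a := Rmin (icoord z) (icoord x)). set (b := Rmax (icoord z) (icoord x)).
  set (below := fun w : pt Interval => -1 < icoord w < icoord y).
  set (above := fun w : pt Interval => icoord y < icoord w < 2).
  assert (Hsplit : forall u, a <= u <= b ->
            below (iter t T (iclamp u)) \/ above (iter t T (iclamp u))).
  { intros u Hu. pose proof (icoord_bounds (iter t T (iclamp u))).
    assert (icoord (iter t T (iclamp u)) <> icoord y); [|unfold below, above; lra].
    intros He. apply Hn. exists (iclamp u). split; [apply HA; auto|]. apply coord_inj, He. }
  assert (Hdisj : forall w, below w -> above w -> False) by (unfold below, above; intros; lra).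
  assert (Hab : a <= b) by (unfold a, b, Rmin, Rmax; repeat destruct Rle_dec; lra).
  assert (Hends : (iclamp a = z /\ iclamp b = x) \/ (iclamp a = x /\ iclamp b = z)).
  { unfold a, b, Rmin, Rmax; destruct Rle_dec; rewrite !iclamp_icoord; auto. }
  assert (Hno_jump : forall O1 O2 : set Interval,
            (O1 = below /\ O2 = above) \/ (O1 = above /\ O2 = below) ->
            O1 (iter t T (iclamp a)) -> O2 (iter t T (iclamp b)) -> False).
  { intros O1 O2 HO H1 H2. apply (iter_path_connected _ T t iclamp a b O1 O2); auto;
      [apply iclamp_lipschitz | ..];
      destruct HO as [[-> ->]|[-> ->]]; try apply interval_window_open;
      try (intros w Hw1 Hw2; apply (Hdisj w); assumption);
      intros u Hu; destruct (Hsplit u Hu); tauto. }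
  pose proof (icoord_bounds (iter t T z)). pose proof (icoord_bounds (iter t T x)).
  destruct Hends as [[Ea Eb]|[Ea Eb]]; rewrite <- Ea, <- Eb in *; destruct Hbetween as [Hc|Hc];
    [apply (Hno_jump below above) | apply (Hno_jump above below)
    | apply (Hno_jump above below) | apply (Hno_jump below above)];
    unfold below, above; (tauto || lra).
Qed.

Definition iwindow (h : R) (j : nat) : set Interval :=
  fun y => (INR j - 1) * h < icoord y < (INR j + 1) * h.

Lemma nat_floor m y : 0 <= y < INR m -> exists j, (j < m)%nat /\ INR j <= y < INR j + 1.
Proof.
  induction m as [|m IH]; intros Hy.
  - simpl in Hy; lra.
  - rewrite S_INR in Hy. destruct (Rlt_le_dec y (INR m)) as [H|H].
    + destruct (IH ltac:(lra)) as (j & Hj & Hj2). exists j; split; auto.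
    + exists m; split; auto; lra.
Qed.

Lemma iwindow_cover h m x : 0 < h -> INR m * h = 1 -> exists j, (j <= m)%nat /\ iwindow h j x.
Proof.
  intros Hh Hmh. pose proof (icoord_bounds x) as Hx. unfold iwindow.
  destruct (Rlt_le_dec (icoord x) 1) as [Hlt|Hge].
  - assert (Hm : 0 < INR m) by nra.
    destruct (nat_floor m (icoord x * INR m)) as (j & Hj & Hfloor); [nra|].
    exists j; split; [lia|].
    assert (E : icoord x = icoord x * INR m * h) by (rewrite Rmult_assoc, Hmh; ring).
    split; nra.
  - exists m; split; [lia|]. replace (icoord x) with 1 by lra. lra.
Qed.

Lemma iwindow_nonempty h m j : 0 < h -> INR m * h = 1 -> (j <= m)%nat -> exists y, iwindow h j y.
Proof.
  intros Hh Hmh Hj. assert (Hjm : INR j <= INR m) by (apply le_INR; auto).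
  assert (Hjh : 0 <= INR j * h <= 1) by (pose proof (pos_INR j); split; nra).
  exists (iclamp (INR j * h)). unfold iwindow. rewrite icoord_iclamp by auto. lra.
Qed.

Lemma iwindow_segment h j z x u : iwindow h j z -> iwindow h j x ->
  Rmin (icoord z) (icoord x) <= u <= Rmax (icoord z) (icoord x) -> iwindow h j (iclamp u).
Proof.
  unfold iwindow. intros Hz Hx Hu. pose proof (icoord_bounds z). pose proof (icoord_bounds x).
  assert (Hu01 : 0 <= u <= 1) by (unfold Rmin, Rmax in Hu; repeat destruct Rle_dec; lra).
  rewrite icoord_iclamp by auto. unfold Rmin, Rmax in Hu; destruct Rle_dec in Hu; lra.
Qed.

(* The windows detect displacements larger than [4 h]: either [T^t] maps the
   window of [x] off itself, or (by the intermediate value property) the image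
   of that window swallows the window two steps towards [T^t x]. *)
Lemma interval_detects_displacement (T : pt Interval -> pt Interval) h m eps :
  homeomorphism T -> 0 < h -> INR m * h = 1 -> 4 * h < eps ->
  detects_displacement T (iwindow h) (seq 0 (S m)) eps.
Proof.
  intros HT Hh Hmh Heps t x Hx.
  change (dist Interval (iter t T x) x) with (Rabs (icoord (iter t T x) - icoord x)) in Hx.
  assert (Hin : forall j, (j <= m)%nat -> In j (seq 0 (S m))) by (intros j Hj; apply in_seq; lia).
  destruct (iwindow_cover h m x Hh Hmh) as (j & Hjm & Hxj).
  destruct (classic (exists z, iwindow h j z /\ iwindow h j (iter t T z))) as [(z & Hz & HTz)|Hno].
  2:{ exists j, j. do 2 (split; [auto|]). intros y Hy. left. split; auto.
      intros (z & Hz & Hzy). apply Hno. exists z. subst; auto. }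
  pose proof (icoord_bounds (iter t T x)). pose proof (pos_INR j).
  assert (Hseg := iwindow_segment h j z x). unfold iwindow in *.
  destruct (Rlt_le_dec (icoord x) (icoord (iter t T x))) as [Hup|Hdown];
    [rewrite Rabs_right in Hx by lra | rewrite Rabs_left1 in Hx by lra].
  - assert (Hj2 : (j + 2 <= m)%nat).
    { assert (INR (j + 2) < INR m); [|apply INR_lt in H1; lia].
      rewrite plus_INR. simpl. nra. }
    exists j, (j + 2)%nat. do 2 (split; [auto|]).
    intros y Hy. unfold iwindow in Hy. rewrite plus_INR in Hy. simpl in Hy.
    right. split; [|lra].
    apply interval_image_between with z x; auto. left; lra.
  - assert (Hj2 : (2 <= j)%nat).
    { assert (INR 1 < INR j); [|apply INR_lt in H1; lia]. simpl. nra. }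
    exists j, (j - 2)%nat. do 2 (split; [auto|]); [apply Hin; lia|].
    intros y Hy. unfold iwindow in Hy. rewrite minus_INR in Hy by lia. simpl in Hy.
    right. split; [|lra].
    apply interval_image_between with z x; auto. right; lra.
Qed.

Lemma interval_rigid_uniformly_rigid (mu : set Interval -> R) (T : pt Interval -> pt Interval)
  (n : nat -> nat) :
  is_measure mu -> full_support mu -> homeomorphism T -> rigid_along mu T n ->
  uniformly_rigid_along T n.
Proof.
  intros Hm Hfs HT Hr eps Heps.
  destruct (archimed_cor1 (eps / 4) ltac:(lra)) as (m & Hsmall & Hm0).
  assert (Hmpos : 0 < INR m) by (apply lt_0_INR; auto).
  set (h := / INR m).
  assert (Hh : 0 < h) by (apply Rinv_0_lt_compat; auto).
  assert (Hmh : INR m * h = 1) by (unfold h; field; lra).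
  apply (rigid_displacement_bound Interval mu T n nat (iwindow h) (seq 0 (S m)) eps Hm HT Hr).
  - intros j Hj. apply in_seq in Hj.
    assert (Hopen : is_open (iwindow h j)) by apply interval_window_open.
    split; [apply borel_open; auto|].
    apply Hfs; auto. apply (iwindow_nonempty h m); auto; lia.
  - apply interval_detects_displacement; auto. unfold h. lra.
Qed.

(* The circle [R/Z], represented by [0, 1).  Arcs are described through the
   offset [frac (y - c)] of a point [y] measured from a base point [c]; since
   all the quantities involved lie in [(-2, 2)], fractional parts reduce to
   explicit case splits. *)

Definition ccoord : pt Circle -> R := coord Circle.

Lemma ccoord_bounds y : 0 <= ccoord y < 1.
Proof. destruct y as [y Hy]; simpl; auto. Qed.

Lemma frac_part_shift (r : R) (k : Z) : 0 <= r + IZR k < 1 -> frac_part r = r + IZR k.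
Proof.
  intros H. pose proof (base_fp r) as [H1 H2]. unfold frac_part in *.
  assert (E : (k + Int_part r = 0)%Z).
  { assert (Hb : -1 < IZR (k + Int_part r) < 1) by (rewrite plus_IZR; lra).
    destruct Hb as [H3 H4]. apply lt_IZR in H3. apply lt_IZR in H4. lia. }
  assert (IZR k = - IZR (Int_part r)) by (rewrite <- opp_IZR; f_equal; lia).
  lra.
Qed.

Lemma frac_part_cases (r : R) : -2 <= r < 2 ->
  (r < -1 /\ frac_part r = r + 2) \/ (-1 <= r < 0 /\ frac_part r = r + 1) \/
  (0 <= r < 1 /\ frac_part r = r) \/ (1 <= r /\ frac_part r = r - 1).
Proof.
  intros H. destruct (Rlt_le_dec r (-1)); [left; split; [|apply (frac_part_shift r 2)]; lra|].
  destruct (Rlt_le_dec r 0); [right; left; split; [|apply (frac_part_shift r 1)]; lra|].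
  destruct (Rlt_le_dec r 1).
  - right; right; left. split; [lra|]. rewrite (frac_part_shift r 0); simpl; lra.
  - right; right; right. split; [lra|]. apply (frac_part_shift r (-1)). simpl; lra.
Qed.

(* Replace every innermost [frac_part r] of the goal by its value, after
   checking [-2 <= r < 2] with [lra]. *)
Ltac split_frac := repeat match goal with |- context [frac_part ?r] =>
  lazymatch r with context [frac_part _] => fail | _ =>
    let h := fresh "fc" in let hr := fresh "fb" in
    destruct (frac_part_cases r) as [h|[h|[h|h]]]; [lra|..];
    destruct h as [hr h]; rewrite ?h in *; clear h
  end end.

Definition offset (c y : R) : R := frac_part (y - c).

Lemma offset_bounds c y : 0 <= offset c y < 1.
Proof. unfold offset. pose proof (base_fp (y - c)). lra. Qed.

Lemma frac_part_bounds v : 0 <= frac_part v < 1.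
Proof. pose proof (base_fp v). lra. Qed.

Definition cpoint (v : R) : pt Circle := exist _ (frac_part v) (frac_part_bounds v).

Lemma offset_cpoint c t : -1 <= c < 1 -> 0 <= t < 1 -> offset c (ccoord (cpoint (t + c))) = t.
Proof. intros Hc Ht. unfold offset, ccoord, cpoint; simpl. split_frac; lra. Qed.

Lemma offset_inj c y y' : -1 <= c < 1 -> offset c (ccoord y) = offset c (ccoord y') -> y = y'.
Proof.
  intros Hc H. apply coord_inj. change (ccoord y = ccoord y').
  pose proof (ccoord_bounds y). pose proof (ccoord_bounds y'). unfold offset in H.
  revert H. split_frac; intros; lra.
Qed.

Lemma offset_self c : 0 <= c < 1 -> offset c c = 0.
Proof. intros. unfold offset. split_frac; lra. Qed.

Lemma dist_offset c y x : -1 <= c < 1 ->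
  dist Circle y x = Rmin (Rabs (offset c (ccoord y) - offset c (ccoord x)))
                         (1 - Rabs (offset c (ccoord y) - offset c (ccoord x))).
Proof.
  intros Hc. pose proof (ccoord_bounds y). pose proof (ccoord_bounds x).
  change (dist Circle y x) with (Rmin (Rabs (ccoord y - ccoord x)) (1 - Rabs (ccoord y - ccoord x))).
  unfold offset. split_frac; split_abs_min; lra.
Qed.

Lemma offset_rebase c q y : -1 <= c < 1 ->
  (offset c (ccoord q) <= offset c (ccoord y) /\
     offset (ccoord q) (ccoord y) = offset c (ccoord y) - offset c (ccoord q)) \/
  (offset c (ccoord y) < offset c (ccoord q) /\
     offset (ccoord q) (ccoord y) = offset c (ccoord y) - offset c (ccoord q) + 1).
Proof.
  intros Hc. pose proof (ccoord_bounds y). pose proof (ccoord_bounds q). unfold offset.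
  split_frac; lra.
Qed.

Definition carc (c a b : R) : set Circle := fun y => a < offset c (ccoord y) < b.

Lemma carc_open c a b : -1 <= c < 1 -> 0 <= a -> b <= 1 -> is_open (carc c a b).
Proof.
  intros Hc Ha Hb y Hy. unfold carc in *.
  set (o := offset c (ccoord y)) in *.
  exists (Rmin (o - a) (b - o)). split; [apply Rmin_glb_lt; lra|].
  intros z Hz. rewrite (dist_offset c) in Hz by auto. fold o in Hz.
  pose proof (offset_bounds c (ccoord z)).
  pose proof (Rmin_l (o - a) (b - o)). pose proof (Rmin_r (o - a) (b - o)).
  set (e := Rmin (o - a) (b - o)) in *. split_abs_min; lra.
Qed.

Definition half_clamp (t : R) := Rmax 0 (Rmin t (1/2)).

Lemma half_clamp_bounds t : 0 <= half_clamp t <= 1/2.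
Proof. unfold half_clamp, Rmax, Rmin; repeat destruct Rle_dec; lra. Qed.

Lemma half_clamp_id t : 0 <= t <= 1/2 -> half_clamp t = t.
Proof. unfold half_clamp, Rmax, Rmin; repeat destruct Rle_dec; lra. Qed.

Lemma half_clamp_lipschitz t u : Rabs (half_clamp t - half_clamp u) <= Rabs (t - u).
Proof. unfold half_clamp, Rmax, Rmin; repeat destruct Rle_dec; split_abs_min; lra. Qed.

Definition cpath (c t : R) : pt Circle := cpoint (half_clamp t + c).

Lemma offset_cpath c t : -1 <= c < 1 -> offset c (ccoord (cpath c t)) = half_clamp t.
Proof. intros Hc. apply offset_cpoint; auto. pose proof (half_clamp_bounds t). lra. Qed.

Lemma cpath_lipschitz c : -1 <= c < 1 ->
  forall t u, dist Circle (cpath c t) (cpath c u) <= Rabs (t - u).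
Proof.
  intros Hc t u. rewrite (dist_offset c), !offset_cpath by auto.
  eapply Rle_trans; [apply Rmin_l | apply half_clamp_lipschitz].
Qed.

Lemma cpath_offset c y : -1 <= c < 1 -> 0 <= offset c (ccoord y) <= 1/2 ->
  cpath c (offset c (ccoord y)) = y.
Proof.
  intros Hc H. apply (offset_inj c); auto. rewrite offset_cpath by auto. apply half_clamp_id; auto.
Qed.

(* If [A] contains the arc from [z]
   to [x] and [T^t A] misses the points [q] and [p], then [T^t z] and [T^t x]
   cannot lie on different sides of [p] in the circle cut open at [q]: the arcs
   [(q, p)] and [(p, q)] would disconnect the path [T^t (arc from z to x)]. *)
Lemma circle_image_not_across (T : pt Circle -> pt Circle) (t : nat) (c : R) (A : set Circle)
  (z x p q : pt Circle) :
  homeomorphism T -> -1 <= c < 1 ->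
  offset c (ccoord z) <= 1/2 -> offset c (ccoord x) <= 1/2 ->
  (forall u, Rmin (offset c (ccoord z)) (offset c (ccoord x)) <= u <=
             Rmax (offset c (ccoord z)) (offset c (ccoord x)) -> A (cpath c u)) ->
  ~ image_iter T t A p -> ~ image_iter T t A q ->
  0 < offset (ccoord q) (ccoord (iter t T z)) < offset (ccoord q) (ccoord p) ->
  offset (ccoord q) (ccoord p) < offset (ccoord q) (ccoord (iter t T x)) -> False.
Proof.
  intros HT Hc Hz Hx HA Hp Hq Hzp Hpx.
  pose proof (ccoord_bounds q) as Hq01.
  set (qc := ccoord q) in *. set (D := offset qc (ccoord p)) in *.
  set (a := Rmin (offset c (ccoord z)) (offset c (ccoord x))).
  set (b := Rmax (offset c (ccoord z)) (offset c (ccoord x))).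
  set (before := carc qc 0 D). set (after := carc qc D 1).
  assert (Hsplit : forall u, a <= u <= b ->
            before (iter t T (cpath c u)) \/ after (iter t T (cpath c u))).
  { intros u Hu. set (w := iter t T (cpath c u)).
    assert (Hw : image_iter T t A w) by (exists (cpath c u); split; [apply HA|]; auto).
    pose proof (offset_bounds qc (ccoord w)).
    assert (offset qc (ccoord w) <> D).
    { intros He. apply Hp. replace p with w; auto. apply (offset_inj qc); auto; lra. }
    assert (offset qc (ccoord w) <> 0).
    { intros He. apply Hq. replace q with w; auto. apply (offset_inj qc); [lra|].
      rewrite He. apply eq_sym, offset_self; auto. }
    unfold before, after, carc. destruct (Rlt_le_dec (offset qc (ccoord w)) D); [left|right]; lra. }
  assert (Hdisj : forall w, before w -> after w -> False) by (unfold before, after, carc; intros; lra).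
  assert (Hab : a <= b) by (unfold a, b, Rmin, Rmax; repeat destruct Rle_dec; lra).
  assert (Hends : (cpath c a = z /\ cpath c b = x) \/ (cpath c a = x /\ cpath c b = z)).
  { pose proof (offset_bounds c (ccoord z)). pose proof (offset_bounds c (ccoord x)).
    unfold a, b, Rmin, Rmax; destruct Rle_dec; rewrite !cpath_offset by (auto; lra); auto. }
  assert (HD : D < 1) by apply offset_bounds.
  assert (Hno_jump : forall O1 O2 : set Circle,
            (O1 = before /\ O2 = after) \/ (O1 = after /\ O2 = before) ->
            O1 (iter t T (cpath c a)) -> O2 (iter t T (cpath c b)) -> False).
  { intros O1 O2 HO H1 H2. apply (iter_path_connected _ T t (cpath c) a b O1 O2); auto;
      [apply cpath_lipschitz; auto | ..];
      destruct HO as [[-> ->]|[-> ->]]; try (apply carc_open; lra);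
      try (intros w Hw1 Hw2; apply (Hdisj w); assumption);
      intros u Hu; destruct (Hsplit u Hu); tauto. }
  pose proof (offset_bounds qc (ccoord (iter t T x))).
  destruct Hends as [[Ea Eb]|[Ea Eb]]; rewrite <- Ea, <- Eb in *;
    [apply (Hno_jump before after) | apply (Hno_jump after before)];
    unfold before, after, carc; (tauto || lra).
Qed.

(* With [m L = 1] and [L <= 1/5],
   each base point [c = (j - 1) L] carries three arcs of offsets: the window
   [(0, 2L)], its right neighbour [(2L, 3L)] and its left neighbour
   [(1 - L, 1)]. *)

Definition arc_lo (r : nat) (L : R) : R := match r with O => 0 | 1%nat => 2 * L | _ => 1 - L end.
Definition arc_hi (r : nat) (L : R) : R := match r with O => 2 * L | 1%nat => 3 * L | _ => 1 end.

Definition circle_arc (L : R) (jr : nat * nat) : set Circle :=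
  carc ((INR (fst jr) - 1) * L) (arc_lo (snd jr) L) (arc_hi (snd jr) L).

Definition circle_arc_indices (m : nat) : list (nat * nat) :=
  list_prod (seq 0 m) (0 :: 1 :: 2 :: nil)%nat.

Lemma circle_arc_index_in m j r : (j < m)%nat -> (r <= 2)%nat -> In (j, r) (circle_arc_indices m).
Proof.
  intros Hj Hr. apply in_prod_iff. split; [apply in_seq; lia|].
  destruct r as [|[|[|r]]]; simpl; auto; lia.
Qed.

Lemma circle_base_bounds L m j : 0 < L -> INR m * L = 1 -> (j < m)%nat -> -1 <= (INR j - 1) * L < 1.
Proof.
  intros HL HmL Hj. assert (INR j + 1 <= INR m) by (rewrite <- S_INR; apply le_INR; lia).
  pose proof (pos_INR j). split; nra.
Qed.

Lemma circle_arc_open_nonempty L m jr : 0 < L <= 1/5 -> INR m * L = 1 ->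
  In jr (circle_arc_indices m) -> is_open (circle_arc L jr) /\ exists y, circle_arc L jr y.
Proof.
  intros HL HmL Hjr. destruct jr as [j r]. apply in_prod_iff in Hjr as [Hj Hr].
  apply in_seq in Hj. pose proof (circle_base_bounds L m j ltac:(lra) HmL ltac:(lia)) as Hc.
  assert (Hbounds : 0 <= arc_lo r L < arc_hi r L /\ arc_hi r L <= 1)
    by (destruct Hr as [<-|[<-|[<-|[]]]]; simpl; lra).
  unfold circle_arc; simpl. split; [apply carc_open; lra|].
  exists (cpoint ((arc_lo r L + arc_hi r L) / 2 + (INR j - 1) * L)).
  unfold carc. rewrite offset_cpoint; lra.
Qed.

Lemma circle_base_point L m x : 0 < L <= 1/5 -> INR m * L = 1 ->
  exists j, (j < m)%nat /\ L <= offset ((INR j - 1) * L) (ccoord x) < 2 * L.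
Proof.
  intros [HL HL5] HmL. pose proof (ccoord_bounds x).
  assert (Hm : 0 < INR m) by nra.
  destruct (nat_floor m (ccoord x * INR m)) as (j & Hjm & Hj); [split; nra|].
  exists j; split; auto.
  assert (E : ccoord x = ccoord x * INR m * L) by (rewrite Rmult_assoc, HmL; ring).
  assert (Hx : INR j * L <= ccoord x < INR j * L + L).
  { destruct Hj as [Hj1 Hj2].
    pose proof (Rmult_le_compat_r L _ _ (Rlt_le _ _ HL) Hj1).
    pose proof (Rmult_lt_compat_r L _ _ HL Hj2). nra. }
  pose proof (circle_base_bounds L m j HL HmL Hjm).
  unfold offset. split_frac; lra.
Qed.

Lemma circle_offsets_ordered c L (x y w p q : pt Circle) : -1 <= c < 1 -> 0 < L <= 1/5 ->
  L <= offset c (ccoord x) < 2 * L -> 3 * L < dist Circle y x ->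
  0 < offset c (ccoord w) < 2 * L -> 2 * L < offset c (ccoord p) < 3 * L ->
  1 - L < offset c (ccoord q) < 1 ->
  0 < offset (ccoord q) (ccoord w) < offset (ccoord q) (ccoord p) /\
  offset (ccoord q) (ccoord p) < offset (ccoord q) (ccoord y).
Proof.
  intros Hc HL Hx Hyx Hw Hp Hq. rewrite (dist_offset c) in Hyx by auto.
  pose proof (offset_bounds c (ccoord y)).
  destruct (offset_rebase c q w Hc) as [[A1 A2]|[A1 A2]];
  destruct (offset_rebase c q p Hc) as [[B1 B2]|[B1 B2]];
  destruct (offset_rebase c q y Hc) as [[C1 C2]|[C1 C2]];
  rewrite ?A2, ?B2, ?C2; split_abs_min; lra.
Qed.

Lemma circle_detects_displacement (T : pt Circle -> pt Circle) L m eps :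
  homeomorphism T -> 0 < L <= 1/5 -> INR m * L = 1 -> 3 * L <= eps ->
  detects_displacement T (circle_arc L) (circle_arc_indices m) eps.
Proof.
  intros HT HL HmL Heps t x Hx.
  destruct (circle_base_point L m x HL HmL) as (j & Hjm & Hox).
  set (c := (INR j - 1) * L) in Hox.
  assert (Hc : -1 <= c < 1) by (apply (circle_base_bounds L m); auto; lra).
  set (P := carc c 0 (2 * L)).
  assert (HP : forall r, circle_arc L (j, r) = carc c (arc_lo r L) (arc_hi r L)) by reflexivity.
  assert (Hin := fun r => circle_arc_index_in m j r Hjm).
  destruct (classic (exists z, P z /\ P (iter t T z))) as [(z & Hz & HTz)|Hno].
  { (* [T^t P] meets [P]: its image must cover one of the two neighbours. *)
    destruct (classic (forall y, carc c (2 * L) (3 * L) y -> image_iter T t P y)) as [Hr|Hr].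
    { exists (j, O), (j, 1%nat). do 2 (split; [apply Hin; lia|]).
      intros y Hy. rewrite HP in Hy. right. split; [apply Hr; auto|].
      unfold circle_arc, P, carc, c in *; simpl in *. lra. }
    destruct (classic (forall y, carc c (1 - L) 1 y -> image_iter T t P y)) as [Hl|Hl].
    { exists (j, O), (j, 2%nat). do 2 (split; [apply Hin; lia|]).
      intros y Hy. rewrite HP in Hy. right. split; [apply Hl; auto|].
      unfold circle_arc, P, carc, c in *; simpl in *. lra. }
    exfalso.
    apply not_all_ex_not in Hr as (p & Hp). apply imply_to_and in Hp as (Hp1 & Hp2).
    apply not_all_ex_not in Hl as (q & Hq). apply imply_to_and in Hq as (Hq1 & Hq2).
    unfold P, carc in Hz, HTz, Hp1, Hq1.
    destruct (circle_offsets_ordered c L x (iter t T x) (iter t T z) p q) as [Hzp Hpx];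
      auto; try lra.
    apply (circle_image_not_across T t c P z x p q); auto; try lra.
    intros u Hu. unfold P, carc. rewrite offset_cpath, half_clamp_id by
      (auto; unfold Rmin, Rmax in Hu; destruct Rle_dec in Hu; lra).
    unfold Rmin, Rmax in Hu; destruct Rle_dec in Hu; lra. }
  exists (j, O), (j, O). do 2 (split; [apply Hin; lia|]).
  intros y Hy. left. split; auto. intros (z & Hz & Hzy). apply Hno. exists z. subst; auto.
Qed.

Lemma circle_rigid_uniformly_rigid (mu : set Circle -> R) (T : pt Circle -> pt Circle)
  (n : nat -> nat) :
  is_measure mu -> full_support mu -> homeomorphism T -> rigid_along mu T n ->
  uniformly_rigid_along T n.
Proof.
  intros Hm Hfs HT Hr eps Heps.
  destruct (archimed_cor1 (eps / 3) ltac:(lra)) as (N & HN & HN0).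
  set (m := (N + 5)%nat). set (L := / INR m).
  assert (HmN : INR m = INR N + 5) by (unfold m; rewrite plus_INR; simpl; ring).
  assert (HNpos : 0 < INR N) by (apply lt_0_INR; auto).
  assert (HmL : INR m * L = 1) by (unfold L; field; lra).
  assert (HL : 0 < L <= 1/5) by (split; [unfold L; apply Rinv_0_lt_compat|]; nra).
  assert (H3L : 3 * L <= eps).
  { assert (L <= / INR N); [|lra].
    unfold L. apply Rinv_le_contravar; lra. }
  apply (rigid_displacement_bound Circle mu T n _ (circle_arc L) (circle_arc_indices m) eps
           Hm HT Hr).
  - intros jr Hjr. destruct (circle_arc_open_nonempty L m jr HL HmL Hjr) as [Hopen Hne].
    split; [apply borel_open; auto | apply Hfs; auto].
  - apply circle_detects_displacement; auto.
Qed.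

Theorem lemma3p1 (s : Space) (mu : set s -> R) (T : pt s -> pt s) :
  is_measure mu -> nonatomic mu -> radon mu -> full_support mu ->
  homeomorphism T -> measure_preserving mu T ->
  forall n : nat -> nat, tends_to_infty n ->
    (rigid_along mu T n <-> uniformly_rigid_along T n).
Proof.
  intros Hm _ Hradon Hfs HT Hmp n _. split.
  - destruct s; [apply interval_rigid_uniformly_rigid | apply circle_rigid_uniformly_rigid]; auto.
  - apply uniformly_rigid_rigid; auto.
Qed.
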